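(* Let $n\ge3$, $l\ge1$, $\mathfrak g=A^{(2)}_{2n-1}$, $B$ the level-$l$ perfect crystal of the context, $\lambda=l\Lambda_0$, $d=2n-1$, and $i^{(j)}_1=i^{(j)}_{2n-1}=\epsilon(j+1)$, $i^{(j)}_a=i^{(j)}_{2n-a}=a$ for $2\le a\le n$. Then: (II) $B^{(j)}_d=B$ for all $j\ge1$; (III) $\langle\lambda_j,h_{i^{(j)}_a}\rangle\le\varepsilon_{i^{(j)}_a}(b)$ for all $j\ge1$, $1\le a\le d$, $b\in B^{(j)}_{a-1}$; (IV') for all $j\ge1$, $a=1,\dots,d$: $\varepsilon_{i^{(j)}_{a+1}}(b^{(j)}_a)=0$, $\varphi_{i^{(j)}_{a+1}}(b^{(j)}_a)>0$ (with $i^{(j)}_{d+1}:=i^{(j+1)}_1$), and $b^{(j+1)}_0=\tilde f_{i^{(j+1)}_1}^mb^{(j)}_d$ with $m=\langle\lambda_{j+1},h_{i^{(j+1)}_1}\rangle$. Moreover $B^{(j)}_0=\{(0,\dots,0,l)\}$ ($j$ odd), $\{(l,0,\dots,0)\}$ ($j$ even), $B^{(j)}_{2n-1}=B$, and for $1\le a\le n-1$: $B^{(j)}_a$ is the set of $b\in B$ with all coordinates $0$ except possibly $x_2,\dots,x_{a+1},\bar x_1$ ($j$ odd), resp. $x_1,\dots,x_{a+1}$ ($j$ even); $B^{(j)}_{n+a-1}$ is the set of $b\in B$ with all coordinates $0$ except possibly $x_2,\dots,x_n,\bar x_n,\dots,\bar x_{n-a+1},\bar x_1$ ($j$ odd),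 resp. $x_1,\dots,x_n,\bar x_n,\dots,\bar x_{n-a+1}$ ($j$ even). Also $b^{(j)}_0=(0,\dots,0,l)$ ($j$ odd), $(l,0,\dots,0)$ ($j$ even); $b^{(j)}_{2n-1}=(l,0,\dots,0)$ ($j$ odd), $(0,\dots,0,l)$ ($j$ even); and for $1\le a\le n-1$, $b^{(j)}_a$ has $x_{a+1}=l$ and $b^{(j)}_{n+a-1}$ has $\bar x_{n-a+1}=l$, all other coordinates $0$.
   Context: $\epsilon(i)=0$ for $i$ even and $1$ for $i$ odd; $(x)_+=\max(x,0)$. $B=\{(x_1,\dots,x_n,\bar x_n,\dots,\bar x_1)\in\mathbb Z^{2n}: x_i,\bar x_i\ge0,\ \sum_{i=1}^n(x_i+\bar x_i)=l\}$. Crystal structure: $\tilde f_0b=(x_1,x_2+1,\dots,\bar x_2,\bar x_1-1)$ if $x_2\ge\bar x_2$, $(x_1+1,x_2,\dots,\bar x_2-1,\bar x_1)$ if $x_2<\bar x_2$; for $1\le i\le n-1$, $\tilde f_ib$ replaces $(x_i,x_{i+1})$ by $(x_i-1,x_{i+1}+1)$ if $x_{i+1}\ge\bar x_{i+1}$, and $(\bar x_{i+1},\bar x_i)$ by $(\bar x_{i+1}-1,\bar x_i+1)$ if $x_{i+1}<\bar x_{i+1}$; $\tilde f_nb$ replaces $(x_n,\bar x_n)$ by $(x_n-1,\bar x_n+1)$; $\tilde e_ib=b'$ iff $\tilde f_ib'=b$; results outside $B$ mean $0$. $\varphi_0(b)=\bar x_1+(\bar x_2-x_2)_+$, $\varepsilon_0(b)=x_1+(x_2-\bar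 x_2)_+$; $\varphi_i(b)=x_i+(\bar x_{i+1}-x_{i+1})_+$, $\varepsilon_i(b)=\bar x_i+(x_{i+1}-\bar x_{i+1})_+$ ($1\le i\le n-1$); $\varphi_n(b)=x_n$, $\varepsilon_n(b)=\bar x_n$. For $\lambda=l\Lambda_0$: $\lambda_j=l\Lambda_{\epsilon(j)}$, $\overline b_j=(0,\dots,0,l)$ ($j$ odd), $(l,0,\dots,0)$ ($j$ even); $\langle\lambda_j,h_i\rangle$ is the coefficient of $\Lambda_i$ in $\lambda_j$. Given $d$, $i^{(j)}_a$: $B^{(j)}_0=\{\overline b_j\}$, $B^{(j)}_a=\bigcup_{n\ge0}\tilde f_{i^{(j)}_a}^nB^{(j)}_{a-1}\setminus\{0\}$; $b^{(j)}_0=\overline b_j$, $b^{(j)}_a=\tilde f_{i^{(j)}_a}^{\varphi_{i^{(j)}_a}(b^{(j)}_{a-1})}b^{(j)}_{a-1}$. *)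

(* Crystal B for A^{(2)}_{2n-1}, level l.
   An element b = (x_1,...,x_n,xb_n,...,xb_1) is a list of 2n naturals:
   position k-1 holds x_k, position 2n-k holds xb_k. *)
From mathcomp Require Import all_boot.
Set Implicit Arguments. Unset Strict Implicit. Unset Printing Implicit Defensive.

Section Crystal.
Variables (n l : nat).

Definition inB (b : seq nat) : bool := (size b == 2 * n) && (sumn b == l).

Definition px (k : nat) := k.-1.
Definition pxb (k : nat) := 2 * n - k.
Definition xc (b : seq nat) k := nth 0 b (px k).
Definition xbc (b : seq nat) k := nth 0 b (pxb k).

Definition incr (p : nat) (b : seq nat) := set_nth 0 b p (nth 0 b p).+1.
(* decrement coordinate p; None (= the crystal 0) if it would become negative *)
Definition decr (p : nat) (b : seq nat) : option (seq nat) :=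
  if 0 < nth 0 b p then Some (set_nth 0 b p (nth 0 b p).-1) else None.

(* Kashiwara operator f_i; None stands for 0 *)
Definition fop (i : nat) (b : seq nat) : option (seq nat) :=
  if i == 0 then
    if xbc b 2 <= xc b 2 then omap (incr (px 2)) (decr (pxb 1) b)
    else omap (incr (px 1)) (decr (pxb 2) b)
  else if i < n then
    if xbc b i.+1 <= xc b i.+1 then omap (incr (px i.+1)) (decr (px i) b)
    else omap (incr (pxb i)) (decr (pxb i.+1) b)
  else if i == n then omap (incr (pxb n)) (decr (px n) b)
  else None.

Fixpoint fpow (i k : nat) (b : seq nat) : option (seq nat) :=
  if k is k'.+1 then obind (fop i) (fpow i k' b) else Some b.

(* (x)_+ is truncated subtraction on nat *)
Definition eps (i : nat) (b : seq nat) : nat :=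
  if i == 0 then xc b 1 + (xc b 2 - xbc b 2)
  else if i < n then xbc b i + (xc b i.+1 - xbc b i.+1)
  else if i == n then xbc b n else 0.

Definition phi (i : nat) (b : seq nat) : nat :=
  if i == 0 then xbc b 1 + (xbc b 2 - xc b 2)
  else if i < n then xc b i + (xbc b i.+1 - xc b i.+1)
  else if i == n then xc b n else 0.

Definition vec_x (k : nat) : seq nat := set_nth 0 (nseq (2 * n) 0) (px k) l.
Definition vec_xb (k : nat) : seq nat := set_nth 0 (nseq (2 * n) 0) (pxb k) l.

(* epsilon(j) = odd j ; lambda_j = l Lambda_{epsilon(j)} *)
Definition lam_h (j i : nat) : nat := if i == (odd j : nat) then l else 0.

Definition bbar (j : nat) : seq nat := if odd j then vec_xb 1 else vec_x 1.

Definition idx (j a : nat) : nat :=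
  if (a == 1) || (a == 2 * n - 1) then (odd j.+1 : nat)
  else if a <= n then a else 2 * n - a.

Fixpoint Bset (j a : nat) (b : seq nat) : Prop :=
  if a is a'.+1 then exists b' k, Bset j a' b' /\ fpow (idx j a) k b' = Some b
  else b = bbar j.

Fixpoint bvec (j a : nat) : option (seq nat) :=
  if a is a'.+1 then
    obind (fun b => fpow (idx j a) (phi (idx j a) b) b) (bvec j a')
  else Some (bbar j).

Definition suppB (Ax Axb : pred nat) (b : seq nat) : Prop :=
  inB b /\ forall k, 1 <= k <= n ->
    (~~ Ax k -> xc b k = 0) /\ (~~ Axb k -> xbc b k = 0).

End Crystal.

From mathcomp Require Import all_boot zify.
Set Implicit Arguments. Unset Strict Implicit. Unset Printing Implicit Defensive.

(* Number the coordinates of b in B by positions 0, ..., 2n-1 (x_1, ..., x_n, xb_n, ..., xb_1).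
   Every f_i (i <= n) moves one unit from a position to another, choosing between two
   moves src i -> dst i and src' i -> dst' i by comparing two coordinates, and phi_i, eps_i
   are read off the same four positions.  Along the path, b^(j)_t is l times the unit vector
   at a position bpos j t, and f_(i_(t+1)) moves all of it to bpos j (t+1); hence
   b^(j)_(t+1) is the next such vector, with eps = 0 and phi = l there.  By induction on t,
   B^(j)_t consists of the elements of B supported on the positions visited so far: the
   f_(i_(t+1))-strings starting there stay in the enlarged support, and conversely every
   element of the enlarged support is reached by pulling mass back along f^(-1), with a
   measure that decreases.  Finally i^(j)_a never equals epsilon(j), so (III) is trivial. *)

(* Only variables are rewritten: rewriting with an equation between numerals loops. *)
Ltac case_ifs := repeat match goal with |- context [if ?c then _ else _] =>
  lazymatch c with
  | context [if _ then _ else _] => fail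
  | ?x == ?y => let e := fresh "e" in
      case: (x =P y) => e; [try (is_var x; rewrite e) | move/eqP: e => e]
  | _ => let h := fresh "h" in case: (boolP c) => h
  end end.

Lemma leq_nth_sumn (s : seq nat) i : nth 0 s i <= sumn s.
Proof.
elim: s i => [|x s IHs] [|i] //=; first exact: leq_addr.
exact: leq_trans (IHs i) (leq_addl _ _).
Qed.

Lemma nth_set0 (s : seq nat) i y r :
  nth 0 (set_nth 0 s i y) r = if r == i then y else nth 0 s r.
Proof. exact: nth_set_nth. Qed.

Definition move (p q : nat) (b : seq nat) : option (seq nat) := omap (incr q) (decr p b).

Lemma move_some p q b : 0 < nth 0 b p -> exists c, move p q b = Some c.
Proof. by rewrite /move /decr => ->; eexists. Qed.

Section Move.
Variables (p q : nat) (b c : seq nat).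
Hypothesis bc : move p q b = Some c.

Lemma move_pos : 0 < nth 0 b p.
Proof. by move: bc; rewrite /move /decr; case: ifP. Qed.

Lemma move_lt_size : p < size b.
Proof. by rewrite ltnNge; apply: contraTN move_pos => /(nth_default 0) ->. Qed.

Lemma moveE : c = incr q (set_nth 0 b p (nth 0 b p).-1).
Proof. by move: bc; rewrite /move /decr move_pos => -[]. Qed.

(* Stated additively so that it also covers p = q. *)
Lemma nth_move r : nth 0 c r + (r == p) = nth 0 b r + (r == q).
Proof. by rewrite moveE /incr !nth_set0; have := move_pos; case_ifs; lia. Qed.

Lemma size_move : q < size b -> size c = size b.
Proof. by move=> qb; rewrite moveE /incr !size_set_nth; have := move_lt_size; lia. Qed.

Lemma sumn_move : sumn c = sumn b.
Proof.
rewrite moveE /incr !sumn_set_nth0.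
by have := leq_nth_sumn b p; have := move_pos; lia.
Qed.

End Move.

Lemma moveK p q b c : move p q b = Some c -> q < size b -> move q p c = Some b.
Proof.
move=> bc qb; have [|d cd] := @move_some q p c.
  by have := nth_move bc q; rewrite eqxx; case: (q =P p) => [->|_]; have := move_pos bc; lia.
rewrite cd; congr Some; apply: (@eq_from_nth _ 0) => [|r _].
  by rewrite (size_move cd) (size_move bc) //; have := move_lt_size bc; lia.
by have := nth_move bc r; have := nth_move cd r; lia.
Qed.

Section Crystal.
Variables n l : nat.

Definition supported (A : pred nat) (b : seq nat) : Prop :=
  inB n l b /\ forall p, ~~ A p -> nth 0 b p = 0.

Lemma supported_size (A : pred nat) b : supported A b -> size b = 2 * n.
Proof. by case=> /andP[/eqP]. Qed.

Lemma supported_sub (A A' : pred nat) b :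
  (forall p, p < 2 * n -> A p -> A' p) -> supported A b -> supported A' b.
Proof.
move=> AA' Ab; split=> [|p nA'p]; first exact: Ab.1.
case: (ltnP p (2 * n)) => [p_lt | p_ge]; last by rewrite nth_default // (supported_size Ab).
by apply: Ab.2; apply: contra nA'p; apply: AA'.
Qed.

Lemma supported_eq (A A' : pred nat) b :
  (forall p, p < 2 * n -> A p = A' p) -> supported A b <-> supported A' b.
Proof. by move=> AA'; split; apply: supported_sub => p /AA' ->. Qed.

Lemma supported_full (A : pred nat) b :
  (forall p, p < 2 * n -> A p) -> supported A b <-> inB n l b.
Proof.
move=> Afull; rewrite (@supported_eq A predT) => [|p /Afull ->] //.
by split=> [[] | Bb].
Qed.

Lemma supported_U1 (A : pred nat) q b :
  supported (predU1 q A) b -> nth 0 b q = 0 -> supported A b.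
Proof.
move=> [Bb out_b] bq; split=> // r nAr.
by case: (r =P q) => [-> // | /eqP rq]; apply: out_b; rewrite /= negb_or rq.
Qed.

Lemma supported_move (A : pred nat) p q b c :
  supported A b -> move p q b = Some c -> A q -> q < 2 * n -> supported A c.
Proof.
move=> [/andP[/eqP size_b /eqP sum_b] out_b] bc Aq q_lt.
split=> [|r Ar]; first by rewrite /inB (sumn_move bc) (size_move bc) size_b ?sum_b ?eqxx.
have rq : r != q by apply: contraNneq Ar => ->.
by have := nth_move bc r; rewrite out_b //; lia.
Qed.

Definition single p : seq nat := set_nth 0 (nseq (2 * n) 0) p l.

Lemma nth_single p r : nth 0 (single p) r = if r == p then l else 0.
Proof. by rewrite nth_set0 nth_nseq if_same. Qed.

Lemma supported_single p b : p < 2 * n -> supported (pred1 p) b <-> b = single p.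
Proof.
move=> p_lt; have size_nseq_set x : size (set_nth 0 (nseq (2 * n) 0) p x) = 2 * n.
  by rewrite size_set_nth size_nseq; lia.
have sum_nseq_set x : sumn (set_nth 0 (nseq (2 * n) 0) p x) = x.
  by rewrite sumn_set_nth0 sumn_nseq nth_nseq p_lt; lia.
split=> [[/andP[/eqP size_b /eqP sum_b] out_b] | ->]; last first.
  split=> [|r]; first by rewrite /inB size_nseq_set sum_nseq_set !eqxx.
  by rewrite nth_single /= => /negbTE ->.
have b_eq : b = set_nth 0 (nseq (2 * n) 0) p (nth 0 b p).
  apply: (@eq_from_nth _ 0) => [|r _]; first by rewrite size_nseq_set.
  by rewrite nth_set0 nth_nseq if_same; case: eqP => [-> | /eqP rp] //; apply: out_b.
by rewrite {1}b_eq /single -sum_b {2}b_eq sum_nseq_set.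
Qed.

Hypothesis n_gt1 : 1 < n.

Definition src i := if i == 0 then 2 * n - 1 else i.-1.
Definition dst i := if i == 0 then 1 else i.
Definition src' i := if i == 0 then 2 * n - 2 else if i < n then 2 * n - i.+1 else n.
Definition dst' i := if i == 0 then 0 else 2 * n - i.

Lemma fop_rule i b : i <= n -> fop n i b =
  if nth 0 b (src' i) <= nth 0 b (dst i) then move (src i) (dst i) b
  else move (src' i) (dst' i) b.
Proof.
rewrite /fop /src /dst /src' /dst' /xc /xbc /px /pxb.
case: (i =P 0) => [-> | /eqP i_gt0] // i_le; case: ltnP => // i_ge.
have -> : i = n by lia.
by rewrite eqxx leqnn (_ : 2 * n - n = n) //; lia.
Qed.

Lemma phi_rule i b : i <= n ->
  phi n i b = nth 0 b (src i) + (nth 0 b (src' i) - nth 0 b (dst i)).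
Proof.
rewrite /phi /src /dst /src' /xc /xbc /px /pxb.
case: (i =P 0) => [-> | /eqP i_gt0] // i_le; case: ltnP => // i_ge.
have -> : i = n by lia.
by rewrite eqxx subnn addn0.
Qed.

Lemma eps_rule i b : i <= n ->
  eps n i b = nth 0 b (dst' i) + (nth 0 b (dst i) - nth 0 b (src' i)).
Proof.
rewrite /eps /dst /src' /dst' /xc /xbc /px /pxb.
case: (i =P 0) => [-> | /eqP i_gt0] // i_le; case: ltnP => // i_ge.
have -> : i = n by lia.
by rewrite eqxx subnn addn0.
Qed.

Lemma rule_lt i : i <= n ->
  [/\ src i < 2 * n, dst i < 2 * n, src' i < 2 * n & dst' i < 2 * n].
Proof. by rewrite /src /dst /src' /dst'; case_ifs => ?; split; lia. Qed.

Lemma fpowSr i k b : fpow n i k.+1 b = obind (fpow n i k) (fop n i b).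
Proof.
elim: k b => [|k IHk] b; first by rewrite /=; case: (fop n i b).
by rewrite -[LHS]/(obind (fop n i) (fpow n i k.+1 b)) IHk; case: (fop n i b).
Qed.

Definition orbit i (P : seq nat -> Prop) (b : seq nat) : Prop :=
  exists b' k, P b' /\ fpow n i k b' = Some b.

Lemma eq_orbit i (P P' : seq nat -> Prop) :
  (forall b, P b <-> P' b) -> forall b, orbit i P b <-> orbit i P' b.
Proof. by move=> PP' b; split=> -[b' [k [Pb' fk]]]; exists b', k; split=> //; apply/PP'. Qed.

Lemma orbit_closure i (P Q : seq nat -> Prop) (m : seq nat -> nat) :
  (forall b, P b -> Q b) ->
  (forall b c, Q b -> fop n i b = Some c -> Q c) ->
  (forall b, Q b -> P b \/ exists2 c, Q c & m c < m b /\ fop n i c = Some b) ->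
  forall b, orbit i P b <-> Q b.
Proof.
move=> PQ Qclosed Qback b; split=> [[b' [k [Pb' fk]]] | Qb].
  elim: k b fk => [|k IHk] b /=; first by move=> [<-]; apply: PQ.
  by case fk: (fpow n i k b') => [d|] //= db; apply: Qclosed db; apply: IHk.
have [N] := ubnP (m b); elim: N b Qb => // N IHN b Qb mb.
case: (Qback b Qb) => [Pb | [c Qc [mc cb]]]; first by exists b, 0.
have [d [k [Pd fk]]] := IHN c Qc (leq_trans mc mb).
by exists d, k.+1; rewrite /= fk.
Qed.

(* How f_i enlarges a support A by q, moving mass out of p: either f_i always makes its
   first move p -> q on vectors supported in A and q, or p -> q is its second move and
   the first one stays inside A. *)
Inductive step (i : nat) (A : pred nat) (p q : nat) : Prop :=
| StepDirect of src i = p & dst i = q & dst' i != p & ~~ A (src' i)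
| StepSwitch of src' i = p & dst' i = q & A (src i) & A (dst i)
    & uniq [:: src i; dst i; p; q].

Section Step.
Variables (i : nat) (A : pred nat) (p q : nat).
Hypotheses (i_le : i <= n) (Ap : A p) (pq : p != q).

Lemma orbit_direct : src i = p -> dst i = q -> ~~ A (src' i) ->
  forall b, orbit i (supported A) b <-> supported (predU1 q A) b.
Proof.
move=> srcE dstE nAsrc'; have := rule_lt i_le; rewrite srcE dstE => -[p_lt q_lt _ _].
have fopE c : supported (predU1 q A) c -> fop n i c = move p q c.
  move=> [_ out_c]; rewrite fop_rule // srcE dstE ifT //.
  case: (src' i =P q) => [-> // | /eqP ne].
  by rewrite out_c //= negb_or ne.
apply: (orbit_closure (m := fun c => nth 0 c q)) => [c | c d Qc | c Qc].
- by apply: supported_sub => r _; apply: predU1r.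
- by rewrite fopE // => cd; apply: supported_move Qc cd (predU1l _ erefl) q_lt.
case: (posnP (nth 0 c q)) => [cq0 | cq_gt0]; first by left; apply: supported_U1 cq0.
have [d cd] := move_some p cq_gt0.
right; exists d; first exact: supported_move Qc cd (predU1r _ _ Ap) p_lt.
split; first by have := nth_move cd q; rewrite eqxx eq_sym (negbTE pq); lia.
rewrite fopE ?(moveK cd) ?(supported_size Qc) //.
exact: supported_move Qc cd (predU1r _ _ Ap) p_lt.
Qed.

Lemma orbit_switch : src' i = p -> dst' i = q -> A (src i) -> A (dst i) ->
  uniq [:: src i; dst i; p; q] ->
  forall b, orbit i (supported A) b <-> supported (predU1 q A) b.
Proof.
move=> src'E dst'E Asrc Adst; rewrite /= !inE => uq.
have := rule_lt i_le; rewrite src'E dst'E => -[src_lt dst_lt p_lt q_lt].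
have fopE c : fop n i c =
    if nth 0 c p <= nth 0 c (dst i) then move (src i) (dst i) c else move p q c.
  by rewrite fop_rule // src'E dst'E.
(* undoing either move lowers c_q, or the excess of c_(dst i) over c_p *)
apply: (orbit_closure (m := fun c => nth 0 c q + (nth 0 c (dst i) - nth 0 c p)))
  => [c | c d Qc | c Qc].
- by apply: supported_sub => r _; apply: predU1r.
- rewrite fopE; case: ifP => _ cd.
    exact: supported_move Qc cd (predU1r _ _ Adst) dst_lt.
  exact: supported_move Qc cd (predU1l _ erefl) q_lt.
case: (ltnP (nth 0 c p) (nth 0 c (dst i))) => [lt_p_dst | le_dst_p].
  have [|d cd] := @move_some (dst i) (src i) c; first lia.
  right; exists d; first exact: supported_move Qc cd (predU1r _ _ Asrc) src_lt.
  have := nth_move cd p; have := nth_move cd q; have := nth_move cd (dst i).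
  rewrite eqxx => d_dst d_q d_p; split; first lia.
  by rewrite fopE ifT ?(moveK cd) ?(supported_size Qc) //; lia.
case: (posnP (nth 0 c q)) => [cq0 | cq_gt0]; first by left; apply: supported_U1 cq0.
have [d cd] := move_some p cq_gt0.
right; exists d; first exact: supported_move Qc cd (predU1r _ _ Ap) p_lt.
have := nth_move cd p; have := nth_move cd q; have := nth_move cd (dst i).
rewrite !eqxx => d_dst d_q d_p; split; first lia.
by rewrite fopE ifF ?(moveK cd) ?(supported_size Qc) //; lia.
Qed.

Hypothesis st : step i A p q.

Lemma orbit_step b : orbit i (supported A) b <-> supported (predU1 q A) b.
Proof. by case: st => *; [apply: orbit_direct | apply: orbit_switch]. Qed.

Lemma phi_step : phi n i (single p) = l.
Proof.
rewrite phi_rule // !nth_single.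
case: st => [-> _ _ nAsrc' | -> _ _ _]; last by rewrite /= !inE; case_ifs; lia.
have /negbTE -> : src' i != p by apply: contraNneq nAsrc' => ->.
by rewrite eqxx sub0n addn0.
Qed.

Lemma eps_step : eps n i (single p) = 0.
Proof.
rewrite eps_rule // !nth_single.
case: st => [_ -> /negbTE -> _ | _ -> _ _]; last by rewrite /= !inE; case_ifs; lia.
by rewrite eq_sym (negbTE pq).
Qed.

Lemma fpow_step : fpow n i l (single p) = Some (single q).
Proof.
have [p_lt q_lt] : p < 2 * n /\ q < 2 * n.
  by case: (rule_lt i_le) st => ? ? ? ? [<- <- | <- <-].
have pair_fop c : supported (pred2 p q) c -> 0 < nth 0 c p -> fop n i c = move p q c.
  move=> [_ out_c] cp; rewrite fop_rule //.
  case: st => [srcE dstE _ nAsrc' | src'E dst'E _ _].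
    rewrite srcE dstE ifT //; case: (src' i =P q) => [-> // | /eqP ne].
    have ne' : src' i != p by apply: contraNneq nAsrc' => ->.
    by rewrite out_c //= negb_or ne ne'.
  rewrite /= !inE => uq.
  by rewrite src'E dst'E ifF // (out_c (dst i)) /=; lia.
have transfer k c : supported (pred2 p q) c -> nth 0 c p = k ->
    exists2 c', fpow n i k c = Some c' & supported (pred1 q) c'.
  elim: k c => [|k IHk] c Qc ck; first by exists c => //; apply: supported_U1 Qc ck.
  have cp : 0 < nth 0 c p by rewrite ck.
  have [d cd] := move_some q cp.
  rewrite fpowSr pair_fop // cd /=.
  apply: IHk; first exact: supported_move Qc cd (predU1r _ _ (eqxx q)) q_lt.
  by have := nth_move cd p; rewrite eqxx (negbTE pq); lia.
have single_pair : supported (pred2 p q) (single p).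
  by apply: supported_sub ((supported_single _ p_lt).2 erefl) => r _ /= ->.
have single_p : nth 0 (single p) p = l by rewrite nth_single eqxx.
by have [c' -> /(supported_single _ q_lt) ->] := transfer l _ single_pair single_p.
Qed.

End Step.

Definition bpos j t :=
  if t == 0 then (if odd j then 2 * n - 1 else 0)
  else if t == 2 * n - 1 then (if odd j then 0 else 2 * n - 1) else t.

(* the positions bpos j u, u <= t *)
Definition visited j t : pred nat :=
  fun p => (p == bpos j 0) || (0 < p <= t) || (p == bpos j t).

Lemma visitedS j t : t <= 2 * n - 2 ->
  forall p, visited j t.+1 p = predU1 (bpos j t.+1) (visited j t) p.
Proof. by move=> t_le p; rewrite /visited /bpos /=; case: (odd j); case_ifs; lia. Qed.

Lemma path_step j t : t <= 2 * n - 2 ->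
  [/\ idx n j t.+1 <= n, visited j t (bpos j t), bpos j t != bpos j t.+1
    & step (idx n j t.+1) (visited j t) (bpos j t) (bpos j t.+1)].
Proof.
move=> t_le; split.
- by rewrite /idx; case: (odd j.+1); case_ifs; lia.
- by rewrite /visited eqxx !orbT.
- by rewrite /bpos; case: (odd j); case_ifs; lia.
(* up to i = n the path uses the first move of f_i, afterwards the second one *)
case: (leqP t.+1 n) => t_lt; [apply: StepDirect | apply: StepSwitch];
  rewrite /idx /src /dst /src' /dst' /visited /bpos /= ?inE; case: (odd j); case_ifs; lia.
Qed.

Lemma bbar_single j : bbar n l j = single (bpos j 0).
Proof. by rewrite /bbar /bpos; case: (odd j). Qed.

Lemma Bset_supported j t : t <= 2 * n - 1 ->
  forall b, Bset n l j t b <-> supported (visited j t) b.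
Proof.
elim: t => [|t IHt] t_le b.
  have p_lt : bpos j 0 < 2 * n by rewrite /bpos /=; case: (odd j); lia.
  rewrite /= bbar_single -(supported_single _ p_lt).
  by apply: supported_eq => p _; rewrite /visited /=; case: eqP => //= _; lia.
have t_le' : t <= 2 * n - 2 by lia.
have [i_le Ap pq st] := path_step j t_le'.
rewrite (supported_eq _ (fun p _ => visitedS j t_le' p)) -(orbit_step i_le Ap pq st).
exact: (eq_orbit _ (IHt (ltnW t_le))).
Qed.

Lemma bvec_single j t : t <= 2 * n - 1 -> bvec n l j t = Some (single (bpos j t)).
Proof.
elim: t => [|t IHt] t_le /=; first by rewrite bbar_single.
have t_le' : t <= 2 * n - 2 by lia.
have [i_le Ap pq st] := path_step j t_le'.
by rewrite IHt /= 1?ltnW // (phi_step i_le Ap pq st) (fpow_step i_le Ap pq st).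
Qed.

Lemma path_eps_phi j t : t <= 2 * n - 2 ->
  eps n (idx n j t.+1) (single (bpos j t)) = 0 /\
  phi n (idx n j t.+1) (single (bpos j t)) = l.
Proof.
move=> t_le; have [i_le Ap pq st] := path_step j t_le.
by rewrite (eps_step i_le Ap pq st) (phi_step i_le Ap pq st).
Qed.

Lemma bpos_last j : bpos j (2 * n - 1) = bpos j.+1 0.
Proof. by rewrite /bpos /=; case_ifs; case: (odd j); lia. Qed.

Lemma lam_h_idx j a : 0 < a <= 2 * n - 1 -> lam_h l j (idx n j a) = 0.
Proof. by rewrite /lam_h /idx /=; case: (odd j) => /=; case_ifs; lia. Qed.

Lemma Bset_full j b : Bset n l j (2 * n - 1) b <-> inB n l b.
Proof.
rewrite Bset_supported // supported_full // => p p_lt.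
by rewrite /visited /bpos; case: (odd j); case_ifs; lia.
Qed.

Lemma suppB_supported (Ax Axb : pred nat) b :
  suppB n l Ax Axb b <->
  supported (fun p => if p < n then Ax p.+1 else Axb (2 * n - p)) b.
Proof.
split=> -[Bb out_b]; split=> //.
  move=> p; case: (ltnP p (2 * n)) => [p_lt | p_ge]; last first.
    by move=> _; apply: nth_default; case/andP: Bb => /eqP ->.
  case: ltnP => p_n nA.
    have k_range : 0 < p.+1 <= n by lia.
    exact: (out_b _ k_range).1 nA.
  have k_range : 0 < 2 * n - p <= n by lia.
  have := (out_b _ k_range).2 nA; rewrite /xbc /pxb.
  by rewrite (_ : 2 * n - (2 * n - p) = p) //; lia.
move=> k k_range; split=> nA; apply: out_b.
  have k_lt : k.-1 < n by lia.
  by rewrite k_lt prednK //; lia.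
have k_ge : 2 * n - k < n = false by lia.
by rewrite k_ge (_ : 2 * n - (2 * n - k) = k) //; lia.
Qed.

Lemma Bset_suppB j t (Ax Axb : pred nat) : t <= 2 * n - 1 ->
  (forall p, p < 2 * n -> visited j t p = if p < n then Ax p.+1 else Axb (2 * n - p)) ->
  forall b, Bset n l j t b <-> suppB n l Ax Axb b.
Proof.
by move=> t_le vE b; rewrite Bset_supported // suppB_supported; apply: supported_eq.
Qed.

End Crystal.

Theorem mainTheorem5 (n l : nat) (hn : 3 <= n) (hl : 1 <= l) :
  (* (II) *)
  (forall j, 1 <= j -> forall b, Bset n l j (2 * n - 1) b <-> inB n l b) /\
  (* (III) *)
  (forall j a b, 1 <= j -> 1 <= a <= 2 * n - 1 -> Bset n l j a.-1 b ->
     lam_h l j (idx n j a) <= eps n (idx n j a) b) /\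
  (* (IV') *)
  (forall j a, 1 <= j -> 1 <= a <= 2 * n - 1 ->
     let i' := if a == 2 * n - 1 then idx n j.+1 1 else idx n j a.+1 in
     exists b, bvec n l j a = Some b /\ eps n i' b = 0 /\ 0 < phi n i' b) /\
  (forall j, 1 <= j ->
     bvec n l j.+1 0 =
     obind (fun b => fpow n (idx n j.+1 1) (lam_h l j.+1 (idx n j.+1 1)) b)
           (bvec n l j (2 * n - 1))) /\
  (* description of B^{(j)}_a *)
  (forall j, 1 <= j -> forall b,
     Bset n l j 0 b <-> b = (if odd j then vec_xb n l 1 else vec_x n l 1)) /\
  (forall j, 1 <= j -> forall a, 1 <= a <= n - 1 -> forall b,
     Bset n l j a b <->
     (if odd j then suppB n l (fun k => 2 <= k <= a.+1) (fun k => k == 1) b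
      else suppB n l (fun k => k <= a.+1) pred0 b)) /\
  (forall j, 1 <= j -> forall a, 1 <= a <= n - 1 -> forall b,
     Bset n l j (n + a - 1) b <->
     (if odd j then suppB n l (fun k => 2 <= k) (fun k => (n - a + 1 <= k) || (k == 1)) b
      else suppB n l predT (fun k => n - a + 1 <= k) b)) /\
  (* description of b^{(j)}_a *)
  (forall j, 1 <= j ->
     bvec n l j 0 = Some (if odd j then vec_xb n l 1 else vec_x n l 1) /\
     bvec n l j (2 * n - 1) = Some (if odd j then vec_x n l 1 else vec_xb n l 1)) /\
  (forall j, 1 <= j -> forall a, 1 <= a <= n - 1 ->
     bvec n l j a = Some (vec_x n l a.+1) /\
     bvec n l j (n + a - 1) = Some (vec_xb n l (n - a + 1))).
Proof.
have n_gt1 : 1 < n by lia.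
split; [|split; [|split; [|split; [|split; [|split; [|split; [|split]]]]]]].
- by move=> j _ b; apply: Bset_full.
- by move=> j a b _ a_range _; rewrite (lam_h_idx _ n_gt1).
- move=> j a _ /andP[a_gt0 a_le] /=; rewrite (bvec_single _ n_gt1) //.
  eexists; split=> //; case: (a =P 2 * n - 1) => [-> | a_ne].
    by rewrite (bpos_last n_gt1); have [-> ->] := path_eps_phi l n_gt1 j.+1 (leq0n _).
  have a_lt : a <= 2 * n - 2 by lia.
  by have [-> ->] := path_eps_phi l n_gt1 j a_lt.
- move=> j _; rewrite (lam_h_idx _ n_gt1); last lia.
  by rewrite !(bvec_single _ n_gt1) //= (bpos_last n_gt1).
- by move=> j _ b; split.
- move=> j _ a a_range b; case: ifP => oj; apply: (Bset_suppB _ n_gt1) => [|p p_lt];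
    try rewrite /visited /bpos oj /=; case_ifs; lia.
- move=> j _ a a_range b; case: ifP => oj; apply: (Bset_suppB _ n_gt1) => [|p p_lt];
    try rewrite /visited /bpos oj /=; case_ifs; lia.
- by move=> j _; rewrite !(bvec_single _ n_gt1) // (bpos_last n_gt1) /bpos /=; case: (odd j).
- move=> j _ a a_range; rewrite !(bvec_single _ n_gt1); try lia.
  by rewrite /bpos; case_ifs; split; congr (Some (set_nth _ _ _ _)); rewrite /px /pxb; lia.
Qed.
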